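(* Let $p$ be a prime, $m,t\ge1$, $R^t=\mathbb{F}_{p^m}[u]/\langle u^t\rangle$, $\omega(x)=\omega_0(x)+u\omega_1(x)+\dots+u^{t-1}\omega_{t-1}(x)\in R^t[x]$ with $\omega_i(x)\in\mathbb{F}_{p^m}[x]$, and $R^{t,\omega}=R^t[x]/\langle\omega(x)\rangle$. Let $\omega_0(x)=v_1(x)^{n_1}v_2(x)^{n_2}\cdots v_l(x)^{n_l}$ be the factorization of $\omega_0(x)$ into irreducible polynomials $v_i(x)\in\mathbb{F}_{p^m}[x]$ with positive integers $n_i$. Then every ideal of $R^{t,\omega}$ not contained in $\langle u\rangle$ can be expressed as $$\langle v_1(x)^{k_1}v_2(x)^{k_2}\cdots v_l(x)^{k_l}+u\,r(x)\rangle+J,$$ where $r(x)\in R^{t,\omega}$, $J$ is an ideal of $R^{t,\omega}$ contained in $\langle u\rangle$, and $0\le k_i\le n_i$ for $1\le i\le l$, not all $k_i=n_i$.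
   Context: Elements of $\mathbb{F}_{p^m}[x]$ are regarded as elements of $R^{t,\omega}$ via the natural inclusion $\mathbb{F}_{p^m}\subseteq R^t$. *)

From HB Require Import structures.
From mathcomp Require Import all_boot all_order all_algebra all_field.
Set Implicit Arguments. Unset Strict Implicit. Unset Printing Implicit Defensive.
Import GRing.Theory.
Local Open Scope ring_scope.

Definition is_ideal (S : comPzRingType) (I : S -> Prop) : Prop :=
  [/\ I 0, (forall a b, I a -> I b -> I (a + b)) & (forall r a, I a -> I (r * a))].

Definition principal_ideal (S : comPzRingType) (a : S) : S -> Prop :=
  fun x => exists r : S, x = r * a.

Definition ideal_add (S : comPzRingType) (I J : S -> Prop) : S -> Prop :=
  fun x => exists a b, [/\ I a, J b & x = a + b].

Definition ideal_sub (S : comPzRingType) (I J : S -> Prop) : Prop :=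
  forall x, I x -> J x.

Definition ideal_eq (S : comPzRingType) (I J : S -> Prop) : Prop :=
  forall x, I x <-> J x.

Definition is_quotient_map (A : comNzRingType) (S : comPzRingType)
  (pi : {rmorphism A -> S}) (a : A) : Prop :=
  (forall s : S, exists f : A, pi f = s) /\
  (forall f : A, pi f = 0 <-> exists g : A, f = g * a).

From HB Require Import structures.
From mathcomp Require Import all_boot all_order all_algebra all_field.
From Stdlib Require Import Classical.
From mathcomp Require Import ring.
Set Implicit Arguments.
Unset Strict Implicit.
Import GRing.Theory.
Local Open Scope ring_scope.

(* Reduce modulo u.  The polynomials f in F[x] with f + u s in I for some s
   form an ideal of F[x], and it contains omega_0 because omega = omega_0 mod u.
   An ideal of F[x] containing prod v_i^(n_i) is generated by some
   prod v_i^(k_i) with k <= n: take one of minimal exponent sum in it; if it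
   failed to divide a member f, some v_i^(k_i) would not divide f, and a Bezout
   combination of f and v_i^(k_i) would lower the exponent k_i.  With
   a = prod v_i^(k_i) + u r in I, every element of I is q a + u s, so
   I = <a> + (I meet <u>); and k = n would force I inside <u>. *)

Section PolyDivisibility.
Variable F : fieldType.
Implicit Types (a c f v : {poly F}).

Lemma dvdp_irredp_expS v k c : irreducible_poly v ->
  c %| v ^+ k.+1 -> ~~ (v ^+ k.+1 %| c) -> c %| v ^+ k.
Proof.
move=> irr_v; have v_neq0 := irredp_neq0 irr_v.
have cop_or_dvd c' : coprimep c' v || (v %| c').
  have [gcd_1|gcd_v] := irredp_XsubCP irr_v (dvdp_gcdr c' v).
    by rewrite -gcdp_eqp1 gcd_1.
  by rewrite -(eqp_dvdl _ gcd_v) dvdp_gcdl orbT.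
have coprime_case c' k' : coprimep c' v -> c' %| v ^+ k'.+1 -> c' %| v ^+ k'.
  move=> cop; rewrite -[v ^+ k'.+1]mul1r Gauss_dvdpl ?coprimep_expr //.
  by move/dvdp_trans; apply; apply: dvd1p.
elim: k c => [|k IHk] c c_dvd c_ndvd.
all: case/orP: (cop_or_dvd c) => [cop|]; first exact: coprime_case cop c_dvd.
all: rewrite dvdp_eq => /eqP cE.
  by rewrite cE expr1 dvdp_mulIr in c_ndvd.
move: c_dvd c_ndvd; rewrite cE [v ^+ k.+1]exprSr [v ^+ k.+2]exprSr.
by rewrite !dvdp_mul2r //; apply: IHk.
Qed.

Lemma coprimep_prodr (I : eqType) (w : I -> {poly F}) a (s : seq I) :
  (forall i, i \in s -> coprimep a (w i)) -> coprimep a (\prod_(i <- s) w i).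
Proof.
move=> cop; rewrite big_seq; apply: (big_ind (coprimep a)) => [|x y cx cy|i /cop //].
  exact: coprimep1.
by rewrite coprimepMr cx cy.
Qed.

Lemma dvdp_prod_coprime (I : eqType) (w : I -> {poly F}) f (s : seq I) :
  uniq s -> (forall i j, i != j -> coprimep (w i) (w j)) ->
  (forall i, i \in s -> w i %| f) -> \prod_(i <- s) w i %| f.
Proof.
move=> + cop; elim: s => [|i s IHs] /=; first by rewrite big_nil dvd1p.
case/andP=> i_notin_s s_uniq dvd; rewrite big_cons Gauss_dvdp.
  rewrite dvd ?mem_head // IHs // => j j_s.
  by apply: dvd; rewrite in_cons j_s orbT.
by apply: coprimep_prodr => j j_s; apply: cop; apply: contraNneq i_notin_s => ->.
Qed.

End PolyDivisibility.

Lemma is_ideal_principal (S : comPzRingType) (a : S) : is_ideal (principal_ideal a).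
Proof.
split; first by exists 0; rewrite mul0r.
  by move=> _ _ [x ->] [y ->]; exists (x + y); rewrite mulrDl.
by move=> r _ [x ->]; exists (r * x); rewrite mulrA.
Qed.

Lemma is_idealI (S : comPzRingType) (I J : S -> Prop) :
  is_ideal I -> is_ideal J -> is_ideal (fun x => I x /\ J x).
Proof.
case=> I0 IA IM [J0 JA JM].
by split=> [//|a b [Ia Ja] [Ib Jb]|r a [Ia Ja]]; split; auto.
Qed.

Lemma ideal_eq_add_principal_meet (S : comPzRingType) (I : S -> Prop) (a u : S) :
  is_ideal I -> I a -> (forall x, I x -> exists q s, x = q * a + u * s) ->
  ideal_eq I (ideal_add (principal_ideal a) (fun x => I x /\ principal_ideal u x)).
Proof.
case=> _ IA IM Ia span x; split; last first.
  by case=> _ [z [[q ->] [Iz _] ->]]; apply: IA (IM q _ Ia) Iz.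
move=> Ix; have [q [s xE]] := span x Ix.
exists (q * a), (u * s); split=> //; first by exists q.
split; last by exists s; rewrite mulrC.
have -> : u * s = x + -1 * (q * a) by rewrite xE; ring.
exact: IA Ix (IM _ _ (IM _ _ Ia)).
Qed.

Section PolyIdeal.
Variables (F : fieldType) (D : {poly F} -> Prop).
Hypothesis D_ideal : is_ideal D.

Lemma ideal_dvdp f g : D f -> f %| g -> D g.
Proof. by case: D_ideal => _ _ DM Df; rewrite dvdp_eq => /eqP ->; apply: DM. Qed.

Lemma ideal_gcdp f g : D f -> D g -> D (gcdp f g).
Proof.
case: D_ideal => _ DA DM Df Dg; have [[a b] /= bezout] := Bezoutp f g.
by apply: ideal_dvdp (DA _ _ (DM a _ Df) (DM b _ Dg)) _; rewrite (eqp_dvdl _ bezout).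
Qed.

Variables (l : nat) (v : 'I_l -> {poly F}).
Hypotheses (v_irr : forall i, irreducible_poly (v i))
           (v_cop : forall i j, i != j -> coprimep (v i) (v j)).

Lemma dvdp_prod_pow k f :
  (forall i, v i ^+ k i %| f) -> \prod_(i < l) v i ^+ k i %| f.
Proof.
move=> dvd; apply: dvdp_prod_coprime (index_enum_uniq _) _ (fun i _ => dvd i).
by move=> i j /v_cop/coprimep_expl/coprimep_expr.
Qed.

Lemma ideal_prod_pow_descent k f :
  D (\prod_(i < l) v i ^+ k i) -> D f -> ~~ (\prod_(i < l) v i ^+ k i %| f) ->
  exists k', [/\ forall i, (k' i <= k i)%N,
                 (\sum_(i < l) k' i < \sum_(i < l) k i)%N
               & D (\prod_(i < l) v i ^+ k' i)].
Proof.
move=> Dk Df k_ndvd; case: (D_ideal) => _ _ DM.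
have /existsP[i vi_ndvd] : [exists i, ~~ (v i ^+ k i %| f)].
  by rewrite -negb_forall; apply: contra k_ndvd => /forallP; apply: dvdp_prod_pow.
have ki_gt0 : (0 < k i)%N.
  by rewrite lt0n; apply: contra vi_ndvd => /eqP ->; rewrite expr0 dvd1p.
pose M := \prod_(j < l | j != i) v j ^+ k j.
pose k' j := if j == i then (k i).-1 else k j.
have k'_out j : j != i -> k' j = k j by rewrite /k' => /negPf ->.
exists k'; split.
- by move=> j; rewrite /k'; case: eqP => [->|]; first exact: leq_pred.
- rewrite (bigD1 i) // [X in (_ < X)%N](bigD1 i) //= (eq_bigr k k'_out).
  by rewrite ltn_add2r /k' eqxx ltn_predL.
rewrite (bigD1 i) //= (eq_bigr (fun j => v j ^+ k j)) => [|j /k'_out -> //].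
rewrite /k' eqxx -/M.
have DgcdM : D (gcdp f (v i ^+ k i) * M).
  apply: ideal_dvdp (ideal_gcdp (DM M f Df) Dk) _.
  by rewrite (bigD1 i) //= -/M mulrC (eqp_dvdr _ (mulp_gcdl _ _ _)).
apply: ideal_dvdp DgcdM _; apply: dvdp_mul (dvdpp M).
apply: dvdp_irredp_expS (v_irr i) _ _; rewrite prednK //; first exact: dvdp_gcdr.
by apply: contra vi_ndvd => /dvdp_trans; apply; apply: dvdp_gcdl.
Qed.

Lemma ideal_prod_pow_generator n :
  D (\prod_(i < l) v i ^+ n i) ->
  exists k, [/\ forall i, (k i <= n i)%N, D (\prod_(i < l) v i ^+ k i)
              & forall f, D f -> \prod_(i < l) v i ^+ k i %| f].
Proof.
suff: forall N k, (\sum_(i < l) k i)%N = N -> (forall i, (k i <= n i)%N) ->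
    D (\prod_(i < l) v i ^+ k i) ->
  exists k', [/\ forall i, (k' i <= n i)%N, D (\prod_(i < l) v i ^+ k' i)
               & forall f, D f -> \prod_(i < l) v i ^+ k' i %| f].
  by move/(_ _ n erefl (fun i => leqnn _)).
elim/ltn_ind=> N IHN k sum_k k_le Dk.
case: (classic (forall f, D f -> \prod_(i < l) v i ^+ k i %| f)) => [gen|].
  by exists k.
move=> /not_all_ex_not[f /(imply_to_and (D f))[Df /negP k_ndvd]].
have [k' [k'_le sum_lt Dk']] := ideal_prod_pow_descent Dk Df k_ndvd.
apply: (IHN _ _ k' erefl) => // [|i]; first by rewrite -sum_k.
exact: leq_trans (k'_le i) (k_le i).
Qed.

End PolyIdeal.

Section ResidueIdeal.
Variables (F : fieldType) (S : comPzRingType) (u : S) (e : {rmorphism {poly F} -> S}).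
Hypothesis decomp_mod_u : forall s : S, exists f s', s = e f + u * s'.
Variable I : S -> Prop.
Hypothesis I_ideal : is_ideal I.

Definition residue_ideal : {poly F} -> Prop := fun f => exists s, I (e f + u * s).

Lemma residue_ideal_is_ideal : is_ideal residue_ideal.
Proof.
case: I_ideal => I0 IA IM; split.
- by exists 0; rewrite rmorph0 mulr0 addr0.
- move=> f g [s Is] [s' Is']; exists (s + s'); rewrite rmorphD.
  by have := IA _ _ Is Is'; congr I; ring.
- move=> q f [s Is]; exists (e q * s); rewrite rmorphM.
  by have := IM (e q) _ Is; congr I; ring.
Qed.

Lemma residue_ideal_principal f : principal_ideal u (e f) -> residue_ideal f.
Proof.
case: I_ideal => I0 _ _ [s fE]; exists (- s).
by rewrite fE mulrN mulrC subrr.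
Qed.

Lemma residue_generator_span g r x :
  (forall f, residue_ideal f -> g %| f) -> I x ->
  exists q s, x = q * (e g + u * r) + u * s.
Proof.
move=> g_gen Ix; have [f [s xE]] := decomp_mod_u x.
have : g %| f by apply: g_gen; exists s; rewrite -xE.
rewrite dvdp_eq => /eqP fE.
exists (e (f %/ g)), (s - e (f %/ g) * r).
by rewrite xE {1}fE rmorphM; ring.
Qed.

Lemma residue_generator_sub_principal g :
  principal_ideal u (e g) -> (forall f, residue_ideal f -> g %| f) ->
  ideal_sub I (principal_ideal u).
Proof.
move=> [s0 gE] g_gen x /(residue_generator_span 0 g_gen) [q [s ->]].
by exists (q * s0 + s); rewrite gE; ring.
Qed.

End ResidueIdeal.

Lemma poly_decomp_mod_u (K : nzRingType) (Rt : comNzRingType)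
    (piu : {rmorphism {poly K} -> Rt}) :
  (forall c : Rt, exists d, piu d = c) ->
  forall P : {poly Rt}, exists f Q, P = map_poly (piu \o polyC) f + (piu 'X)%:P * Q.
Proof.
move=> piu_surj; elim/poly_ind => [|P c [f [Q ->]]].
  by exists 0, 0; rewrite rmorph0 mulr0 addr0.
have [d <-] := piu_surj c.
have [d1 [d0 ->]] : exists d1 d0, d = d1 * 'X + d0%:P.
  by elim/poly_ind: d => [|d1 d0 _]; [exists 0, 0; rewrite mul0r polyC0 addr0|exists d1, d0].
exists (f * 'X + d0%:P), (Q * 'X + (piu d1)%:P).
by rewrite !rmorphD !rmorphM /= map_polyX map_polyC /=; ring.
Qed.

Lemma sum_pow_mul_recl (R : pzSemiRingType) (x : R) (q : nat -> R) t :
  \sum_(i < t.+1) x ^+ i * q i = q 0%N + x * \sum_(i < t) x ^+ i * q i.+1.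
Proof.
rewrite big_ord_recl expr0 mul1r mulr_sumr; congr (_ + _).
by apply: eq_bigr => i _; rewrite exprS mulrA.
Qed.

Lemma head_mem_principal (R : pzRingType) (S : comPzRingType)
    (phi : {rmorphism R -> S}) (x : R) (q : nat -> R) t :
  phi (\sum_(i < t.+1) x ^+ i * q i) = 0 -> principal_ideal (phi x) (phi (q 0%N)).
Proof.
rewrite sum_pow_mul_recl rmorphD rmorphM => /eqP; rewrite addr_eq0 => /eqP ->.
by exists (- phi (\sum_(i < t) x ^+ i * q i.+1)); rewrite mulNr mulrC.
Qed.

Theorem lemma3p1
  (p m t : nat) (F : finFieldType)
  (hp : prime p) (hm : (1 <= m)%N) (ht : (1 <= t)%N)
  (hF : #|F| = (p ^ m)%N)
  (* R^t = F[u]/<u^t>, realized by the quotient map piu : F[u] -> R^t *)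
  (Rt : comNzRingType) (piu : {rmorphism {poly F} -> Rt})
  (hRt : is_quotient_map piu ('X ^+ t))
  (* omega(x) = sum_{i<t} u^i omega_i(x), omega_i in F[x] *)
  (om : nat -> {poly F})
  (* R^{t,omega} = R^t[x]/<omega(x)>, realized by the quotient map piw *)
  (S : comPzRingType) (piw : {rmorphism {poly Rt} -> S})
  (hS : is_quotient_map piw
          (\sum_(i < t) (piu 'X ^+ i)%:P * map_poly (fun c => piu c%:P) (om i)))
  (* factorization of omega_0 into irreducibles *)
  (l : nat) (v : 'I_l -> {poly F}) (n : 'I_l -> nat)
  (hv_irr : forall i, irreducible_poly (v i))
  (hv_cop : forall i j, i != j -> coprimep (v i) (v j))
  (hn : forall i, (0 < n i)%N)
  (hfact : om 0%N = \prod_(i < l) v i ^+ n i) :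
  let uS : S := piw (piu 'X)%:P in
  let embS : {poly F} -> S := fun q => piw (map_poly (fun c => piu c%:P) q) in
  forall I : S -> Prop, is_ideal I ->
    ~ ideal_sub I (principal_ideal uS) ->
    exists (k : 'I_l -> nat) (r : S) (J : S -> Prop),
      [/\ is_ideal J, ideal_sub J (principal_ideal uS),
          (forall i, (k i <= n i)%N), ~ (forall i, k i = n i) &
          ideal_eq I (ideal_add
             (principal_ideal (embS (\prod_(i < l) v i ^+ k i) + uS * r)) J)].
Proof.
move=> uS embS I I_ideal I_not_sub.
pose e : {rmorphism {poly F} -> S} := (piw \o map_poly (piu \o polyC))%FUN.
have decomp s : exists f s', s = e f + uS * s'.
  have [P <-] := hS.1 s; have [f [Q ->]] := poly_decomp_mod_u hRt.1 P.
  by exists f, (piw Q); rewrite rmorphD rmorphM.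
have om0_u : principal_ideal uS (e (om 0%N)).
  move: hS; rewrite -(prednK ht) => -[_ omega_ker].
  apply: (head_mem_principal (q := fun i => map_poly (piu \o polyC) (om i))).
  apply/omega_ker; exists 1; rewrite mul1r.
  by apply: eq_bigr => i _; rewrite rmorphXn.
have Dn : residue_ideal uS e I (\prod_(i < l) v i ^+ n i).
  by rewrite -hfact; apply: residue_ideal_principal.
have [k [k_le Dk k_gen]] :=
  ideal_prod_pow_generator (residue_ideal_is_ideal uS e I_ideal) hv_irr hv_cop Dn.
have [r Ir] := Dk.
exists k, r, (fun x => I x /\ principal_ideal uS x); split=> //.
- exact: is_idealI I_ideal (is_ideal_principal uS).
- by move=> x [].
- move=> k_eq_n; apply/I_not_sub/(residue_generator_sub_principal decomp _ k_gen).
  by under eq_bigr do rewrite k_eq_n; rewrite -hfact.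
- apply: ideal_eq_add_principal_meet Ir _ => // x.
  exact: (residue_generator_span decomp r k_gen).
Qed.
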